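(* Let $a>0$, $b>0$, $\mu_1,\mu_2>0$, $\chi_1,\chi_2\ge0$ and $\lambda_1=\lambda_2=\lambda>0$. Let $c^*=c^*(\chi_1,\mu_1,\lambda,\chi_2,\mu_2,\lambda)$ be the quantity defined in the context. Then: (1) if $\chi_1\mu_1=\chi_2\mu_2$, then $c^*=2\sqrt a$ if $a\le\lambda$ and $c^*=\frac{a+\lambda}{\sqrt\lambda}$ if $a\ge\lambda$; (2) if $0<\chi_1\mu_1-\chi_2\mu_2<\frac b2$, then $\lim_{\chi_1\mu_1-\chi_2\mu_2\to0^+}c^*$ equals $2\sqrt a$ if $a\le\lambda$ and $\frac{a+\lambda}{\sqrt\lambda}$ if $a\ge\lambda$ (here $a,b,\lambda$ are fixed and $c^*$ depends on $\chi_1,\chi_2,\mu_1,\mu_2$ only through $\chi_1\mu_1-\chi_2\mu_2$); (3) if $\chi_1\mu_1<\chi_2\mu_2$, then $\lim_{\chi_2\mu_2-\chi_1\mu_1\to0^+}c^*$ equals $2\sqrt a$ if $a\le\lambda$ and $\frac{a+\lambda}{\sqrt\lambda}$ if $a\ge\lambda$.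
   Context: For general $\lambda_1,\lambda_2>0$ and $0<\mu<\min\{1,\sqrt{\lambda_1/a},\sqrt{\lambda_2/a}\}$ define $$\overline{L}_{\mu}=\min\Big\{\frac{\chi_1\mu_1\lambda_1(\lambda_1-\lambda_2)_+}{(\lambda_2-a\mu^2)(\lambda_1-a\mu^2)}+\frac{(\chi_2\mu_2\lambda_2-\chi_1\mu_1\lambda_1)_{+}}{\lambda_2-a\mu^2},\ \frac{\chi_2\mu_2\lambda_2(\lambda_1-\lambda_2)_+}{(\lambda_2-a\mu^2)(\lambda_1-a\mu^2)}+\frac{(\chi_2\mu_2\lambda_2-\chi_1\mu_1\lambda_1)_{+}}{\lambda_1-a\mu^2}\Big\},$$ $$K_{\mu}=\min\Big\{\tfrac{|\chi_2\mu_2-\chi_1\mu_1|(\sqrt{\lambda_2-a\mu^2}+\mu\sqrt a)}{\lambda_2-a\mu^2}+\Big|\tfrac{\chi_1\mu_1}{\sqrt{\lambda_1-a\mu^2}}-\tfrac{\chi_1\mu_1}{\sqrt{\lambda_2-a\mu^2}}\Big|+\tfrac{\mu\sqrt a\chi_1\mu_1|\lambda_1-\lambda_2|}{(\lambda_1-a\mu^2)(\lambda_2-a\mu^2)},\ \tfrac{|\chi_2\mu_2-\chi_1\mu_1|(\sqrt{\lambda_1-a\mu^2}+\mu\sqrt a)}{\lambda_1-a\mu^2}+\Big|\tfrac{\chi_2\mu_2}{\sqrt{\lambda_2-a\mu^2}}-\tfrac{\chi_2\mu_2}{\sqrt{\lambda_1-a\mu^2}}\Big|+\tfrac{\mu\sqrt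 a\chi_2\mu_2|\lambda_2-\lambda_1|}{(\lambda_2-a\mu^2)(\lambda_1-a\mu^2)}\Big\},$$ where $(r)_+=\max\{r,0\}$. Let $\mu^*=\sup\{\bar\mu\in(0,\min\{1,\sqrt{\lambda_1/a},\sqrt{\lambda_2/a}\}) : \mu\sqrt a K_\mu+\overline L_\mu\le b+\chi_2\mu_2-\chi_1\mu_1 \text{ for all } 0<\mu\le\bar\mu\}$ and $c^*(\chi_1,\mu_1,\lambda_1,\chi_2,\mu_2,\lambda_2)=\lim_{\mu\to\mu^{*-}}\sqrt a(\mu+\frac1\mu)$. *)

From HB Require Import structures.
From mathcomp Require Import all_boot all_order all_algebra.
From mathcomp Require Import all_classical all_reals all_analysis.
Set Implicit Arguments. Unset Strict Implicit. Unset Printing Implicit Defensive.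
Import Order.TTheory GRing.Theory Num.Theory.
Import numFieldNormedType.Exports.
Local Open Scope ring_scope.
Local Open Scope classical_set_scope.

Definition posp {R : realType} (r : R) : R := Num.max r 0.

Definition Lbar {R : realType} (a chi1 mu1 l1 chi2 mu2 l2 mu : R) : R :=
  Num.min
    (chi1 * mu1 * l1 * posp (l1 - l2) / ((l2 - a * mu ^+ 2) * (l1 - a * mu ^+ 2))
      + posp (chi2 * mu2 * l2 - chi1 * mu1 * l1) / (l2 - a * mu ^+ 2))
    (chi2 * mu2 * l2 * posp (l1 - l2) / ((l2 - a * mu ^+ 2) * (l1 - a * mu ^+ 2))
      + posp (chi2 * mu2 * l2 - chi1 * mu1 * l1) / (l1 - a * mu ^+ 2)).

Definition Kmu {R : realType} (a chi1 mu1 l1 chi2 mu2 l2 mu : R) : R :=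
  Num.min
    (`|chi2 * mu2 - chi1 * mu1| * (Num.sqrt (l2 - a * mu ^+ 2) + mu * Num.sqrt a)
        / (l2 - a * mu ^+ 2)
      + `|chi1 * mu1 / Num.sqrt (l1 - a * mu ^+ 2) - chi1 * mu1 / Num.sqrt (l2 - a * mu ^+ 2)|
      + mu * Num.sqrt a * chi1 * mu1 * `|l1 - l2|
        / ((l1 - a * mu ^+ 2) * (l2 - a * mu ^+ 2)))
    (`|chi2 * mu2 - chi1 * mu1| * (Num.sqrt (l1 - a * mu ^+ 2) + mu * Num.sqrt a)
        / (l1 - a * mu ^+ 2)
      + `|chi2 * mu2 / Num.sqrt (l2 - a * mu ^+ 2) - chi2 * mu2 / Num.sqrt (l1 - a * mu ^+ 2)|
      + mu * Num.sqrt a * chi2 * mu2 * `|l2 - l1|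
        / ((l2 - a * mu ^+ 2) * (l1 - a * mu ^+ 2))).

Definition mu_bound {R : realType} (a l1 l2 : R) : R :=
  Num.min 1 (Num.min (Num.sqrt (l1 / a)) (Num.sqrt (l2 / a))).

Definition admissible {R : realType} (a b chi1 mu1 l1 chi2 mu2 l2 : R) : set R :=
  [set mubar | 0 < mubar /\ mubar < mu_bound a l1 l2 /\
     (forall mu, 0 < mu -> mu <= mubar ->
        mu * Num.sqrt a * Kmu a chi1 mu1 l1 chi2 mu2 l2 mu
          + Lbar a chi1 mu1 l1 chi2 mu2 l2 mu
        <= b + chi2 * mu2 - chi1 * mu1)].

Definition mu_star {R : realType} (a b chi1 mu1 l1 chi2 mu2 l2 : R) : R :=
  sup (admissible a b chi1 mu1 l1 chi2 mu2 l2).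

Definition c_star {R : realType} (a b chi1 mu1 l1 chi2 mu2 l2 : R) : R :=
  lim ((Num.sqrt a * (mu + mu^-1)) @[mu --> (mu_star a b chi1 mu1 l1 chi2 mu2 l2)^'-]).

From HB Require Import structures.
From mathcomp Require Import all_boot all_order all_algebra.
From mathcomp Require Import all_classical all_reals all_analysis.
From mathcomp Require Import ring lra.
Import Order.TTheory GRing.Theory Num.Theory.
Import numFieldNormedType.Exports.
Local Open Scope ring_scope.
Local Open Scope classical_set_scope.

(* With lam1 = lam2 = lam, only D := chi2 mu2 - chi1 mu1 survives in Kmu and Lbar, and
   for mu <= mubar < mu_bound both are O(|D|) uniformly in mu.  So every mubar below
   m := mu_bound a lam lam = min (1, sqrt (lam / a)) becomes admissible once |D| is
   small, whence mu_star -> m as D -> 0 (and mu_star = m when D = 0).  By continuity,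
   c_star = sqrt a (mu_star + 1 / mu_star) tends to sqrt a (m + 1 / m), which is
   2 sqrt a when a <= lam and (a + lam) / sqrt lam when lam <= a. *)

Definition speed {R : realType} (a mu : R) : R := Num.sqrt a * (mu + mu^-1).

Lemma speed_cvg {R : realType} (a p : R) : 0 < p ->
  speed a mu @[mu --> p] --> speed a p.
Proof.
move=> p_gt0; apply: cvgM; first exact: cvg_cst.
by apply: cvgD; [exact: cvg_id | apply: cvgV; [rewrite gt_eqF | exact: cvg_id]].
Qed.

Lemma lim_speed_left {R : realType} (a p : R) : 0 < p ->
  lim (speed a mu @[mu --> p^'-]) = speed a p.
Proof.
move=> p_gt0; apply: cvg_lim; first exact: norm_hausdorff.
exact/cvg_at_left_filter/speed_cvg.
Qed.

Lemma mu_star_bounds {R : realType} (a b chi1 mu1 l1 chi2 mu2 l2 mubar : R) :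
  admissible a b chi1 mu1 l1 chi2 mu2 l2 mubar ->
  mubar <= mu_star a b chi1 mu1 l1 chi2 mu2 l2 /\
  mu_star a b chi1 mu1 l1 chi2 mu2 l2 <= mu_bound a l1 l2.
Proof.
move=> adm_mubar.
have ub : ubound (admissible a b chi1 mu1 l1 chi2 mu2 l2) (mu_bound a l1 l2).
  by move=> mu [_ [/ltW]].
split; first by apply: ub_le_sup => //; exists (mu_bound a l1 l2).
by apply: ge_sup => //; exists mubar.
Qed.

Section EqualSensitivities.

Context {R : realType} {a b lam : R}.
Hypotheses (a_gt0 : 0 < a) (b_gt0 : 0 < b) (lam_gt0 : 0 < lam).

Lemma Kmu_diag (chi1 mu1 chi2 mu2 mu : R) :
  Kmu a chi1 mu1 lam chi2 mu2 lam mu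
  = `|chi2 * mu2 - chi1 * mu1| * (Num.sqrt (lam - a * mu ^+ 2) + mu * Num.sqrt a)
      / (lam - a * mu ^+ 2).
Proof. by rewrite /Kmu !subrr !normr0 !mulr0 !mul0r !addr0 minxx. Qed.

Lemma Lbar_diag (chi1 mu1 chi2 mu2 mu : R) :
  Lbar a chi1 mu1 lam chi2 mu2 lam mu
  = posp (chi2 * mu2 * lam - chi1 * mu1 * lam) / (lam - a * mu ^+ 2).
Proof. by rewrite /Lbar subrr /posp maxxx !mulr0 !mul0r !add0r minxx. Qed.

Lemma mu_bound_diag : mu_bound a lam lam = Num.min 1 (Num.sqrt (lam / a)).
Proof. by rewrite /mu_bound minxx. Qed.

Lemma mu_bound_gt0 : 0 < mu_bound a lam lam.
Proof. by rewrite mu_bound_diag lt_min ltr01 sqrtr_gt0 divr_gt0. Qed.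

Lemma lt_mu_bound (mu : R) : 0 < mu -> mu < mu_bound a lam lam ->
  mu < 1 /\ 0 < lam - a * mu ^+ 2.
Proof.
move=> mu_gt0; rewrite mu_bound_diag lt_min => /andP[mu_lt1 mu_lt]; split => //.
have lam_a_ge0 : 0 <= lam / a by rewrite divr_ge0 // ltW.
have : mu ^+ 2 < lam / a.
  by rewrite -(sqr_sqrtr lam_a_ge0) ltr_pXn2r // ?nnegrE ?sqrtr_ge0 // ltW.
by rewrite ltr_pdivlMr // subr_gt0 mulrC.
Qed.

Definition admissible_slope (mubar : R) : R :=
  (Num.sqrt a * (Num.sqrt lam + Num.sqrt a) + lam) / (lam - a * mubar ^+ 2).

Lemma admissible_lhs_le (chi1 mu1 chi2 mu2 mu mubar : R) :
  0 < mu -> mu <= mubar -> mubar < mu_bound a lam lam ->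
  mu * Num.sqrt a * Kmu a chi1 mu1 lam chi2 mu2 lam mu + Lbar a chi1 mu1 lam chi2 mu2 lam mu
  <= `|chi2 * mu2 - chi1 * mu1| * admissible_slope mubar.
Proof.
move=> mu_gt0 le_mu mubar_lt.
have [mubar_lt1 S0_gt0] := lt_mu_bound _ (lt_le_trans mu_gt0 le_mu) mubar_lt.
rewrite Kmu_diag Lbar_diag /admissible_slope.
set D := chi2 * mu2 - chi1 * mu1; set S := lam - a * mu ^+ 2; set S0 := lam - a * mubar ^+ 2.
have S0_le : S0 <= S.
  by apply: lerB => //; apply: ler_wpM2l; [exact: ltW | nra].
have S_gt0 : 0 < S := lt_le_trans S0_gt0 S0_le.
have sqa_ge0 := sqrtr_ge0 a; have D_ge0 := normr_ge0 D.
have mu_sqa : mu * Num.sqrt a <= Num.sqrt a.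
  by rewrite ler_piMl // (le_trans le_mu) ?ltW.
have sqS : Num.sqrt S <= Num.sqrt lam.
  by rewrite ler_wsqrtr // gerBl mulr_ge0 ?sqr_ge0 ?ltW.
have posp_le : posp (chi2 * mu2 * lam - chi1 * mu1 * lam) <= lam * `|D|.
  rewrite /posp ge_max (mulr_ge0 (ltW lam_gt0) D_ge0) andbT -mulrBl mulrC.
  by apply: ler_wpM2l; [exact: ltW | exact: ler_norm].
have num_le : mu * Num.sqrt a * (`|D| * (Num.sqrt S + mu * Num.sqrt a))
    + posp (chi2 * mu2 * lam - chi1 * mu1 * lam)
  <= `|D| * (Num.sqrt a * (Num.sqrt lam + Num.sqrt a) + lam).
  rewrite [X in _ <= X]mulrDr [X in _ <= _ + X]mulrC; apply: lerD => //.
  rewrite mulrCA; apply: ler_wpM2l => //.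
  have mu_sqa_ge0 : 0 <= mu * Num.sqrt a := mulr_ge0 (ltW mu_gt0) sqa_ge0.
  by apply: ler_pM => //; [exact: addr_ge0 (sqrtr_ge0 _) mu_sqa_ge0 | exact: lerD].
have num_ge0 : 0 <= `|D| * (Num.sqrt a * (Num.sqrt lam + Num.sqrt a) + lam).
  apply: mulr_ge0 => //; apply: addr_ge0 (ltW lam_gt0).
  exact: mulr_ge0 sqa_ge0 (addr_ge0 (sqrtr_ge0 _) sqa_ge0).
rewrite [_ * (_ / S)]mulrA -mulrDl [X in _ <= X]mulrA.
apply: le_trans (ler_wpM2r _ num_le) _; first by rewrite invr_ge0 ltW.
by rewrite ler_wpM2l // lef_pV2 ?posrE.
Qed.

Lemma admissible_small_gap (chi1 mu1 chi2 mu2 mubar : R) :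
  0 < mubar -> mubar < mu_bound a lam lam ->
  `|chi2 * mu2 - chi1 * mu1| * (admissible_slope mubar + 1) <= b ->
  admissible a b chi1 mu1 lam chi2 mu2 lam mubar.
Proof.
move=> mubar_gt0 mubar_lt small_gap; split=> //; split=> // mu mu_gt0 le_mu.
apply: le_trans (admissible_lhs_le _ _ _ _ _ _ mu_gt0 le_mu mubar_lt) _.
move: small_gap; rewrite -addrA mulrDr mulr1; set D := chi2 * mu2 - chi1 * mu1.
have : - `|D| <= D by rewrite lerNnormlW.
lra.
Qed.

Lemma speed_mu_bound_le : a <= lam -> speed a (mu_bound a lam lam) = 2 * Num.sqrt a.
Proof.
move=> le_a_lam; rewrite /speed mu_bound_diag min_l ?invr1; first by ring.
by rewrite -sqrtr1 ler_wsqrtr // ler_pdivlMr // mul1r.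
Qed.

Lemma speed_mu_bound_ge : lam <= a ->
  speed a (mu_bound a lam lam) = (a + lam) / Num.sqrt lam.
Proof.
move=> le_lam_a; rewrite mu_bound_diag min_r; last first.
  by rewrite -sqrtr1 ler_wsqrtr // ler_pdivrMr // mul1r.
rewrite /speed sqrtrM ?ltW // sqrtrV ?ltW //.
have := sqr_sqrtr (ltW a_gt0); have := sqr_sqrtr (ltW lam_gt0).
have : 0 < Num.sqrt a by rewrite sqrtr_gt0.
have : 0 < Num.sqrt lam by rewrite sqrtr_gt0.
set x := Num.sqrt a; set y := Num.sqrt lam => y_gt0 x_gt0 <- <-.
by field; rewrite !gt_eqF.
Qed.

Lemma c_star_near_diag (eps : R) : 0 < eps -> exists2 delta : R, 0 < delta &
  forall chi1 mu1 chi2 mu2 : R, `|chi2 * mu2 - chi1 * mu1| < delta ->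
  `|c_star a b chi1 mu1 lam chi2 mu2 lam - speed a (mu_bound a lam lam)| < eps.
Proof.
move=> eps_gt0; set m := mu_bound a lam lam; have m_gt0 : 0 < m := mu_bound_gt0.
have /cvgrPdist_lt/(_ eps eps_gt0)/nbhs_ballP[r r_gt0 near_m] := speed_cvg a m m_gt0.
set mubar := m - Num.min r m / 2.
have min_gt0 : 0 < Num.min r m by rewrite lt_min; apply/andP.
have min_le_m : Num.min r m <= m by rewrite ge_min lexx orbT.
have mubar_gt0 : 0 < mubar by rewrite /mubar; lra.
have mubar_lt : mubar < m by rewrite /mubar; lra.
have [_ S0_gt0] := lt_mu_bound _ mubar_gt0 mubar_lt.
have slope_ge0 : 0 <= admissible_slope mubar.
  apply: divr_ge0 (ltW S0_gt0); apply: addr_ge0 (ltW lam_gt0).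
  exact: mulr_ge0 (sqrtr_ge0 _) (addr_ge0 (sqrtr_ge0 _) (sqrtr_ge0 _)).
exists (b / (admissible_slope mubar + 1)); first by rewrite divr_gt0 // ltr_wpDl.
move=> chi1 mu1 chi2 mu2 small_gap.
have adm_mubar : admissible a b chi1 mu1 lam chi2 mu2 lam mubar.
  apply: admissible_small_gap => //.
  by rewrite -ler_pdivlMr ?ltW // ltr_wpDl.
have /mu_star_bounds[le_mubar le_m] := adm_mubar.
rewrite /c_star lim_speed_left ?(lt_le_trans mubar_gt0) //.
rewrite distrC; apply: near_m; rewrite /ball /= ger0_norm ?subr_ge0 //.
have : Num.min r m <= r by rewrite ge_min lexx.
by rewrite /mubar in le_mubar; lra.
Qed.

Lemma c_star_diag (chi1 mu1 chi2 mu2 : R) : chi1 * mu1 = chi2 * mu2 ->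
  c_star a b chi1 mu1 lam chi2 mu2 lam = speed a (mu_bound a lam lam).
Proof.
move=> eq_sens; apply/eqP; rewrite -subr_eq0 -normr_le0.
apply/ler_addgt0Pr => e e_gt0; have [delta delta_gt0 near_diag] := c_star_near_diag e e_gt0.
by rewrite add0r ltW // near_diag // eq_sens subrr normr0.
Qed.

End EqualSensitivities.

Theorem mainTheorem2 (R : realType) (a b lam : R) :
  0 < a -> 0 < b -> 0 < lam ->
  (* (1) chi1 mu1 = chi2 mu2 *)
  (forall chi1 mu1 chi2 mu2 : R,
     0 < mu1 -> 0 < mu2 -> 0 <= chi1 -> 0 <= chi2 ->
     chi1 * mu1 = chi2 * mu2 ->
     (a <= lam -> c_star a b chi1 mu1 lam chi2 mu2 lam = 2 * Num.sqrt a) /\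
     (lam <= a -> c_star a b chi1 mu1 lam chi2 mu2 lam = (a + lam) / Num.sqrt lam)) /\
  (* (2) limit as chi1 mu1 - chi2 mu2 -> 0+, within 0 < chi1 mu1 - chi2 mu2 < b/2 *)
  (forall L : R,
     ((a <= lam /\ L = 2 * Num.sqrt a) \/ (lam <= a /\ L = (a + lam) / Num.sqrt lam)) ->
     forall eps : R, 0 < eps -> exists2 delta : R, 0 < delta &
       forall chi1 mu1 chi2 mu2 : R,
         0 < mu1 -> 0 < mu2 -> 0 <= chi1 -> 0 <= chi2 ->
         0 < chi1 * mu1 - chi2 * mu2 -> chi1 * mu1 - chi2 * mu2 < b / 2 ->
         chi1 * mu1 - chi2 * mu2 < delta ->
         `|c_star a b chi1 mu1 lam chi2 mu2 lam - L| < eps) /\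
  (* (3) limit as chi2 mu2 - chi1 mu1 -> 0+ *)
  (forall L : R,
     ((a <= lam /\ L = 2 * Num.sqrt a) \/ (lam <= a /\ L = (a + lam) / Num.sqrt lam)) ->
     forall eps : R, 0 < eps -> exists2 delta : R, 0 < delta &
       forall chi1 mu1 chi2 mu2 : R,
         0 < mu1 -> 0 < mu2 -> 0 <= chi1 -> 0 <= chi2 ->
         0 < chi2 * mu2 - chi1 * mu1 ->
         chi2 * mu2 - chi1 * mu1 < delta ->
         `|c_star a b chi1 mu1 lam chi2 mu2 lam - L| < eps).
Proof.
move=> a_gt0 b_gt0 lam_gt0.
have speed_m L : (a <= lam /\ L = 2 * Num.sqrt a) \/
    (lam <= a /\ L = (a + lam) / Num.sqrt lam) -> L = speed a (mu_bound a lam lam).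
  by case=> -[? ->]; [rewrite speed_mu_bound_le | rewrite speed_mu_bound_ge].
split; [|split].
- move=> chi1 mu1 chi2 mu2 _ _ _ _ /(c_star_diag a_gt0 b_gt0 lam_gt0) ->.
  by split=> ?; [rewrite speed_mu_bound_le | rewrite speed_mu_bound_ge].
- move=> L /speed_m -> eps /(c_star_near_diag a_gt0 b_gt0 lam_gt0)[delta delta_gt0 near_speed].
  exists delta => // chi1 mu1 chi2 mu2 _ _ _ _ gap_gt0 _ gap_lt.
  by apply: near_speed; rewrite distrC gtr0_norm.
- move=> L /speed_m -> eps /(c_star_near_diag a_gt0 b_gt0 lam_gt0)[delta delta_gt0 near_speed].
  exists delta => // chi1 mu1 chi2 mu2 _ _ _ _ gap_gt0 gap_lt.
  by apply: near_speed; rewrite gtr0_norm.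
Qed.
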